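(* In each of $\mathsf{G}(\mathbf{K}_D)$, $\mathsf{G}(\mathbf{KD}_D)$ and $\mathsf{G}(\mathbf{KT}_D)$, all logical rules other than the modal rules ($(D_K)$ in $\mathsf{G}(\mathbf{K}_D)$; $(D_K)$ and $(D_D)$ in $\mathsf{G}(\mathbf{KD}_D)$; $(D_K)$ and $(D_T)$ in $\mathsf{G}(\mathbf{KT}_D)$), i.e. the rules $(R\wedge),(L\wedge),(R\vee),(L\vee),(R\rightarrow),(L\rightarrow),(R\neg),(L\neg)$, are height-preserving invertible: whenever the conclusion of an instance of such a rule has a derivation of height $n$, each premise of that instance has a derivation of height at most $n$.
   Context: Language: fix a finite nonempty set $\mathsf{Agt}$ of agents and a countable set $\mathsf{Prop}$ of propositional variables; $\mathsf{Grp}$ is the set of nonempty subsets of $\mathsf{Agt}$. Formulas: $\alpha::=p\mid\bot\mid\alpha\wedge\alpha\mid\alpha\vee\alpha\mid\alpha\rightarrow\alpha\mid\neg\alpha\mid D_G\alpha$ ($p\in\mathsf{Prop}$, $G\in\mathsf{Grp}$). Outmost-boxed formula: one of the form $D_G\gamma$. Sequent calculi (sequents $\Gamma\Rightarrow\Delta$ are pairs of finite multisets; a derivation is a finite tree built from initial sequents by rules; its height is the maximum length of a branch from the end sequent to an initial sequent): $\mathsf{G}(\mathbf{K}_D)$ has initial sequents $\Gamma,p\Rightarrow p,\Delta$ and $\bot,\Gamma\Rightarrow\Delta$; rules $(R\wedge)$ from $\Gamma\Rightarrow\Delta,\alpha_1$ and $\Gamma\Rightarrow\Delta,\alpha_2$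 infer $\Gamma\Rightarrow\Delta,\alpha_1\wedge\alpha_2$; $(L\wedge)$ from $\alpha_1,\alpha_2,\Gamma\Rightarrow\Delta$ infer $\alpha_1\wedge\alpha_2,\Gamma\Rightarrow\Delta$; $(R\vee)$ from $\Gamma\Rightarrow\Delta,\alpha_1,\alpha_2$ infer $\Gamma\Rightarrow\Delta,\alpha_1\vee\alpha_2$; $(L\vee)$ from $\alpha_1,\Gamma\Rightarrow\Delta$ and $\alpha_2,\Gamma\Rightarrow\Delta$ infer $\alpha_1\vee\alpha_2,\Gamma\Rightarrow\Delta$; $(R\rightarrow)$ from $\alpha_1,\Gamma\Rightarrow\Delta,\alpha_2$ infer $\Gamma\Rightarrow\Delta,\alpha_1\rightarrow\alpha_2$; $(L\rightarrow)$ from $\Gamma\Rightarrow\Delta,\alpha_1$ and $\alpha_2,\Gamma\Rightarrow\Delta$ infer $\alpha_1\rightarrow\alpha_2,\Gamma\Rightarrow\Delta$; $(R\neg)$ from $\alpha,\Gamma\Rightarrow\Delta$ infer $\Gamma\Rightarrow\Delta,\neg\alpha$; $(L\neg)$ from $\Gamma\Rightarrow\Delta,\alpha$ infer $\neg\alpha,\Gamma\Rightarrow\Delta$; $(D_K)$: from $\alpha_1,\dots,\alpha_n\Rightarrow\beta$ ($n\ge0$) infer $\Sigma,D_{G_1}\alpha_1,\dots,D_{G_n}\alpha_n\Rightarrow D_G\beta,\Omega$ where all $G_i\subseteq G$, $\Sigma$ consists only of propositional variables, $\bot$, and $D_H\gamma$ with $H\not\subseteq G$, and $\Omega$ only of propositional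 variables, $\bot$, outmost-boxed formulas. $\mathsf{G}(\mathbf{KD}_D)$ adds $(D_D)$: from $\Gamma\Rightarrow$ with $\Gamma\neq\emptyset$ infer $\Sigma,D_{\{a\}}\Gamma\Rightarrow\Omega$, $\Sigma$ only propositional variables, $\bot$, $D_H\gamma$ with $H\neq\{a\}$; $\Omega$ only propositional variables, $\bot$, outmost-boxed formulas. $\mathsf{G}(\mathbf{KT}_D)$ adds to $\mathsf{G}(\mathbf{K}_D)$ $(D_T)$: from $D_G\alpha,\alpha,\Gamma\Rightarrow\Delta$ infer $D_G\alpha,\Gamma\Rightarrow\Delta$. *)

From Stdlib Require Import List Permutation.
From mathcomp Require Import all_boot.

Set Implicit Arguments.
Unset Strict Implicit.
Unset Printing Implicit Defensive.

Section Syntax.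
Variable A : finType.

Definition grp := {G : {set A} | G != set0}.

(* Prop is countable: propositional variables are indexed by nat *)
Inductive form : Type :=
| Var of nat
| Bot
| And of form & form
| Or of form & form
| Imp of form & form
| Neg of form
| Box of grp & form.

Lemma set1_neq0 (a : A) : [set a] != set0.
Proof. by apply/set0Pn; exists a; rewrite in_set1. Qed.

Definition sgrp (a : A) : grp := exist _ [set a] (set1_neq0 a).

Definition omega_ok (f : form) : Prop :=
  match f with Var _ | Bot | Box _ _ => True | _ => False end.

Definition sigmaK_ok (G : {set A}) (f : form) : Prop :=
  match f with
  | Var _ | Bot => True
  | Box H _ => ~~ (val H \subset G)
  | _ => False
  end.

Definition sigmaD_ok (a : A) (f : form) : Prop :=
  match f with
  | Var _ | Bot => True
  | Box H _ => val H != [set a]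
  | _ => False
  end.
End Syntax.

Arguments Var {A}.
Arguments Bot {A}.

Inductive calculus := GK | GKD | GKT.

(* der L n Gamma Delta : the sequent Gamma => Delta (finite multisets, represented
   as lists up to permutation) has a derivation in calculus L of height at most n. *)
Inductive der (A : finType) (L : calculus) : nat -> list (form A) -> list (form A) -> Prop :=
| d_init (n : nat) (p : nat) (G0 D0 G D : list (form A)) :
    Permutation G (Var p :: G0) -> Permutation D (Var p :: D0) -> der L n G D
| d_bot (n : nat) (G0 G D : list (form A)) :
    Permutation G (Bot :: G0) -> der L n G D
| d_Rand n a1 a2 G D0 D :
    der L n G (a1 :: D0) -> der L n G (a2 :: D0) ->
    Permutation D (And a1 a2 :: D0) -> der L n.+1 G D
| d_Land n a1 a2 G0 G D :
    der L n (a1 :: a2 :: G0) D ->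
    Permutation G (And a1 a2 :: G0) -> der L n.+1 G D
| d_Ror n a1 a2 G D0 D :
    der L n G (a1 :: a2 :: D0) ->
    Permutation D (Or a1 a2 :: D0) -> der L n.+1 G D
| d_Lor n a1 a2 G0 G D :
    der L n (a1 :: G0) D -> der L n (a2 :: G0) D ->
    Permutation G (Or a1 a2 :: G0) -> der L n.+1 G D
| d_Rimp n a1 a2 G D0 D :
    der L n (a1 :: G) (a2 :: D0) ->
    Permutation D (Imp a1 a2 :: D0) -> der L n.+1 G D
| d_Limp n a1 a2 G0 G D :
    der L n G0 (a1 :: D) -> der L n (a2 :: G0) D ->
    Permutation G (Imp a1 a2 :: G0) -> der L n.+1 G D
| d_Rneg n a G D0 D :
    der L n (a :: G) D0 ->
    Permutation D (Neg a :: D0) -> der L n.+1 G D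
| d_Lneg n a G0 G D :
    der L n G0 (a :: D) ->
    Permutation G (Neg a :: G0) -> der L n.+1 G D
| d_DK n (ps : list (grp A * form A)) (Gr : grp A) (b : form A)
    (Sig Om G D : list (form A)) :
    der L n (map snd ps) [:: b] ->
    (forall q, List.In q ps -> val q.1 \subset val Gr) ->
    (forall f, List.In f Sig -> sigmaK_ok (val Gr) f) ->
    (forall f, List.In f Om -> omega_ok f) ->
    Permutation G (Sig ++ map (fun q => Box q.1 q.2) ps) ->
    Permutation D (Box Gr b :: Om) ->
    der L n.+1 G D
| d_DD n (a : A) (G0 Sig Om G D : list (form A)) :
    L = GKD ->
    der L n G0 [::] ->
    G0 <> [::] ->
    (forall f, List.In f Sig -> sigmaD_ok a f) ->
    (forall f, List.In f Om -> omega_ok f) ->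
    Permutation G (Sig ++ map (Box (sgrp a)) G0) ->
    Permutation D Om ->
    der L n.+1 G D
| d_DT n (Gr : grp A) (a : form A) (G0 G D : list (form A)) :
    L = GKT ->
    der L n (Box Gr a :: a :: G0) D ->
    Permutation G (Box Gr a :: G0) ->
    der L n.+1 G D.

From Stdlib Require Import List Permutation Morphisms.
From mathcomp Require Import all_boot.

Set Implicit Arguments.
Unset Strict Implicit.
Unset Printing Implicit Defensive.

(* Induction on the derivation, with the occurrence of the formula f to be
   inverted located up to permutation.  Initial sequents have a variable or bot
   as principal formula, and the conclusions of (D_K) and (D_D) consist of
   variables, bot and boxed formulas only, so a compound f is never principal
   there and does not occur at all in a (D_K) or (D_D) conclusion.  If f is
   principal in the last rule, its premises are the wanted sequents at height
   n - 1.  Otherwise the last rule keeps f in a context it shares with its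
   premises, so the induction hypothesis applies to them and the rule can be
   reapplied. *)

Lemma Permutation_cons_cases (T : Type) (x y : T) l1 l2 :
  Permutation (x :: l1) (y :: l2) ->
  (x = y /\ Permutation l1 l2) \/
  exists l3, Permutation l1 (y :: l3) /\ Permutation l2 (x :: l3).
Proof.
move=> H; have [l4 [l5 E]] := Permutation_vs_cons_inv H.
case: l4 E => [|z l4] [-> ->] /= in H *.
  by left; split; last exact: Permutation_cons_inv H.
right; exists (l4 ++ l5); split; first by rewrite -Permutation_middle.
apply: (@Permutation_cons_inv _ _ _ y).
by rewrite -H -Permutation_middle; apply: perm_swap.
Qed.

Lemma Permutation_catC (T : Type) (s1 s2 : list T) :
  Permutation (s1 ++ s2) (s2 ++ s1).
Proof. exact: Permutation_app_comm. Qed.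

Section Derivations.
Variables (A : finType) (L : calculus).
Implicit Types (n : nat) (f : form A) (G D : list (form A)).

Lemma der_perm n G D G' D' :
  der L n G D -> Permutation G G' -> Permutation D D' -> der L n G' D'.
Proof.
move=> d; elim: d G' D' => {n G D}; intros;
  [ eapply d_init | eapply d_bot | eapply d_Rand | eapply d_Land | eapply d_Ror
  | eapply d_Lor | eapply d_Rimp | eapply d_Limp | eapply d_Rneg | eapply d_Lneg
  | eapply d_DK | eapply d_DD with (Om := Om) | eapply d_DT ];
  try (by etransitivity; [symmetry; eassumption | eassumption]);
  eauto using perm_skip.
Qed.

Global Instance der_Permutation n :
  Proper (@Permutation _ ==> @Permutation _ ==> iff) (@der A L n).
Proof.
move=> G G' HG D D' HD; split=> d; first exact: der_perm d HG HD.
exact: der_perm d (Permutation_sym HG) (Permutation_sym HD).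
Qed.

Lemma der_succ n G D : der L n G D -> der L n.+1 G D.
Proof.
elim=> {n G D}; intros;
  [ eapply d_init | eapply d_bot | eapply d_Rand | eapply d_Land | eapply d_Ror
  | eapply d_Lor | eapply d_Rimp | eapply d_Limp | eapply d_Rneg | eapply d_Lneg
  | eapply d_DK | eapply d_DD | eapply d_DT ].
all: revgoals; eauto.
Qed.

Lemma der_init n p G D : der L n (Var p :: G) (Var p :: D).
Proof. exact: d_init. Qed.

Lemma der_bot n G D : der L n (Bot :: G) D.
Proof. exact: d_bot. Qed.

Lemma der_Rand n a1 a2 G D :
  der L n G (a1 :: D) -> der L n G (a2 :: D) -> der L n.+1 G (And a1 a2 :: D).
Proof. by move=> d1 d2; apply: d_Rand d1 d2 _. Qed.

Lemma der_Land n a1 a2 G D :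
  der L n (a1 :: a2 :: G) D -> der L n.+1 (And a1 a2 :: G) D.
Proof. by move=> d; apply: d_Land d _. Qed.

Lemma der_Ror n a1 a2 G D :
  der L n G (a1 :: a2 :: D) -> der L n.+1 G (Or a1 a2 :: D).
Proof. by move=> d; apply: d_Ror d _. Qed.

Lemma der_Lor n a1 a2 G D :
  der L n (a1 :: G) D -> der L n (a2 :: G) D -> der L n.+1 (Or a1 a2 :: G) D.
Proof. by move=> d1 d2; apply: d_Lor d1 d2 _. Qed.

Lemma der_Rimp n a1 a2 G D :
  der L n (a1 :: G) (a2 :: D) -> der L n.+1 G (Imp a1 a2 :: D).
Proof. by move=> d; apply: d_Rimp d _. Qed.

Lemma der_Limp n a1 a2 G D :
  der L n G (a1 :: D) -> der L n (a2 :: G) D -> der L n.+1 (Imp a1 a2 :: G) D.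
Proof. by move=> d1 d2; apply: d_Limp d1 d2 _. Qed.

Lemma der_Rneg n a G D : der L n (a :: G) D -> der L n.+1 G (Neg a :: D).
Proof. by move=> d; apply: d_Rneg d _. Qed.

Lemma der_Lneg n a G D : der L n G (a :: D) -> der L n.+1 (Neg a :: G) D.
Proof. by move=> d; apply: d_Lneg d _. Qed.

Lemma der_DT n Gr a G D :
  L = GKT -> der L n (Box Gr a :: a :: G) D -> der L n.+1 (Box Gr a :: G) D.
Proof. by move=> HL d; apply: d_DT HL d _. Qed.

Lemma sigmaK_ok_omega_ok Gr f : sigmaK_ok Gr f -> omega_ok f.
Proof. by case: f. Qed.

Lemma sigmaD_ok_omega_ok a f : sigmaD_ok a f -> omega_ok f.
Proof. by case: f. Qed.

Definition right_premises n f G D : Prop :=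
  match f with
  | And b1 b2 => der L n G (b1 :: D) /\ der L n G (b2 :: D)
  | Or b1 b2 => der L n G (b1 :: b2 :: D)
  | Imp b1 b2 => der L n (b1 :: G) (b2 :: D)
  | Neg b => der L n (b :: G) D
  | _ => False
  end.

Definition left_premises n f G D : Prop :=
  match f with
  | And b1 b2 => der L n (b1 :: b2 :: G) D
  | Or b1 b2 => der L n (b1 :: G) D /\ der L n (b2 :: G) D
  | Imp b1 b2 => der L n G (b1 :: D) /\ der L n (b2 :: G) D
  | Neg b => der L n G (b :: D)
  | _ => False
  end.

Section Inversion.
Variables (f : form A) (Xl Xr : list (form A)).
Hypothesis f_connective : ~ omega_ok f.

(* Xl and Xr are appended at the end so that the principal formula of the last
   rule stays at the head of the sequent, where the rules expect it. *)
Lemma der_invert_right_gen :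
  (forall n G D, right_premises n f G D -> der L n.+1 (G ++ Xl) (D ++ Xr)) ->
  forall n G D, der L n G D ->
  forall D1, Permutation D (f :: D1) -> der L n (G ++ Xl) (D1 ++ Xr).
Proof.
move=> prem n G D d; elim: d => {n G D}.
- move=> n p G0 D0 G D HG HD D1; rewrite HG HD => HD1.
  have [[fE _] | [l [_ ->]]] := Permutation_cons_cases HD1.
    by case: f_connective; rewrite -fE.
  exact: der_init.
- by move=> n G0 G D HG D1 _; rewrite HG; apply: der_bot.
- move=> n b1 b2 G D0 D d1 IH1 d2 IH2 HD D1; rewrite HD => HD1.
  have [[fE <-] | [l [Hl ->]]] := Permutation_cons_cases HD1.
    by apply: prem; rewrite -fE.
  apply: der_Rand; [apply: (IH1 (b1 :: l)) | apply: (IH2 (b2 :: l))];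
    by rewrite Hl; apply: perm_swap.
- move=> n b1 b2 G0 G D _ IH HG D1 HD1; rewrite HG.
  by apply: der_Land; apply: IH.
- move=> n b1 b2 G D0 D d IH HD D1; rewrite HD => HD1.
  have [[fE <-] | [l [Hl ->]]] := Permutation_cons_cases HD1.
    by apply: prem; rewrite -fE.
  apply: der_Ror; apply: (IH [:: b1, b2 & l]).
  by rewrite Hl; symmetry; apply: (Permutation_middle [:: b1; b2]).
- move=> n b1 b2 G0 G D _ IH1 _ IH2 HG D1 HD1; rewrite HG.
  by apply: der_Lor; [apply: IH1 | apply: IH2].
- move=> n b1 b2 G D0 D d IH HD D1; rewrite HD => HD1.
  have [[fE <-] | [l [Hl ->]]] := Permutation_cons_cases HD1.
    by apply: prem; rewrite -fE.
  apply: der_Rimp; apply: (IH (b2 :: l)).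
  by rewrite Hl; apply: perm_swap.
- move=> n b1 b2 G0 G D _ IH1 _ IH2 HG D1 HD1; rewrite HG.
  apply: der_Limp; last exact: IH2.
  by apply: (IH1 (b1 :: D1)); rewrite HD1; apply: perm_swap.
- move=> n b G D0 D d IH HD D1; rewrite HD => HD1.
  have [[fE <-] | [l [Hl ->]]] := Permutation_cons_cases HD1.
    by apply: prem; rewrite -fE.
  by apply: der_Rneg; apply: IH.
- move=> n b G0 G D _ IH HG D1 HD1; rewrite HG.
  by apply: der_Lneg; apply: (IH (b :: D1)); rewrite HD1; apply: perm_swap.
- move=> n ps Gr b Sig Om G D _ _ _ _ HOm _ HD D1; rewrite HD => HD1.
  have fin : List.In f (Box Gr b :: Om) by rewrite HD1; left.
  by case: f_connective; case: fin => [<- | /HOm].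
- move=> n a G0 Sig Om G D _ _ _ _ _ HOm _ HD D1; rewrite HD => HD1.
  by case: f_connective; apply: HOm; rewrite HD1; left.
- move=> n Gr b G0 G D HL _ IH HG D1 HD1; rewrite HG.
  by apply: der_DT => //; apply: IH.
Qed.

Lemma der_invert_left_gen :
  (forall n G D, left_premises n f G D -> der L n.+1 (G ++ Xl) (D ++ Xr)) ->
  forall n G D, der L n G D ->
  forall G1, Permutation G (f :: G1) -> der L n (G1 ++ Xl) (D ++ Xr).
Proof.
move=> prem n G D d; elim: d => {n G D}.
- move=> n p G0 D0 G D HG HD G1; rewrite HG HD => HG1.
  have [[fE _] | [l [_ ->]]] := Permutation_cons_cases HG1.
    by case: f_connective; rewrite -fE.
  exact: der_init.
- move=> n G0 G D HG G1; rewrite HG => HG1.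
  have [[fE _] | [l [_ ->]]] := Permutation_cons_cases HG1.
    by case: f_connective; rewrite -fE.
  exact: der_bot.
- move=> n b1 b2 G D0 D _ IH1 _ IH2 HD G1 HG1; rewrite HD.
  by apply: der_Rand; [apply: IH1 | apply: IH2].
- move=> n b1 b2 G0 G D d IH HG G1; rewrite HG => HG1.
  have [[fE <-] | [l [Hl ->]]] := Permutation_cons_cases HG1.
    by apply: prem; rewrite -fE.
  apply: der_Land; apply: (IH [:: b1, b2 & l]).
  by rewrite Hl; symmetry; apply: (Permutation_middle [:: b1; b2]).
- move=> n b1 b2 G D0 D _ IH HD G1 HG1; rewrite HD.
  by apply: der_Ror; apply: IH.
- move=> n b1 b2 G0 G D d1 IH1 d2 IH2 HG G1; rewrite HG => HG1.
  have [[fE <-] | [l [Hl ->]]] := Permutation_cons_cases HG1.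
    by apply: prem; rewrite -fE.
  apply: der_Lor; [apply: (IH1 (b1 :: l)) | apply: (IH2 (b2 :: l))];
    by rewrite Hl; apply: perm_swap.
- move=> n b1 b2 G D0 D _ IH HD G1 HG1; rewrite HD.
  by apply: der_Rimp; apply: (IH (b1 :: G1)); rewrite HG1; apply: perm_swap.
- move=> n b1 b2 G0 G D d1 IH1 d2 IH2 HG G1; rewrite HG => HG1.
  have [[fE <-] | [l [Hl ->]]] := Permutation_cons_cases HG1.
    by apply: prem; rewrite -fE.
  apply: der_Limp; first exact: IH1.
  by apply: (IH2 (b2 :: l)); rewrite Hl; apply: perm_swap.
- move=> n b G D0 D _ IH HD G1 HG1; rewrite HD.
  by apply: der_Rneg; apply: (IH (b :: G1)); rewrite HG1; apply: perm_swap.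
- move=> n b G0 G D d IH HG G1; rewrite HG => HG1.
  have [[fE <-] | [l [Hl ->]]] := Permutation_cons_cases HG1.
    by apply: prem; rewrite -fE.
  by apply: der_Lneg; apply: IH.
- move=> n ps Gr b Sig Om G D _ _ _ HSig _ HG _ G1; rewrite HG => HG1.
  have fin := Permutation_in _ (Permutation_sym HG1) (in_eq f G1).
  case: f_connective; case: (in_app_or _ _ _ fin).
    by move/HSig/sigmaK_ok_omega_ok.
  by case/in_map_iff=> q [qE _]; rewrite -qE.
- move=> n a G0 Sig Om G D _ _ _ _ HSig _ HG _ G1; rewrite HG => HG1.
  have fin := Permutation_in _ (Permutation_sym HG1) (in_eq f G1).
  case: f_connective; case: (in_app_or _ _ _ fin).
    by move/HSig/sigmaD_ok_omega_ok.
  by case/in_map_iff=> q [qE _]; rewrite -qE.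
- move=> n Gr b G0 G D HL _ IH HG G1; rewrite HG => HG1.
  have [[fE _] | [l [Hl ->]]] := Permutation_cons_cases HG1.
    by case: f_connective; rewrite -fE.
  apply: der_DT => //; apply: (IH [:: Box Gr b, b & l]).
  by rewrite Hl; symmetry; apply: (Permutation_middle [:: Box Gr b; b]).
Qed.

Lemma der_invert_right :
  (forall n G D, right_premises n f G D -> der L n.+1 (Xl ++ G) (Xr ++ D)) ->
  forall n G D, der L n G (f :: D) -> der L n (Xl ++ G) (Xr ++ D).
Proof.
move=> prem n G D d; rewrite (Permutation_catC Xl) (Permutation_catC Xr).
apply: (der_invert_right_gen _ d (Permutation_refl _)) => m G' D' /prem.
by rewrite (Permutation_catC Xl) (Permutation_catC Xr).
Qed.

Lemma der_invert_left :
  (forall n G D, left_premises n f G D -> der L n.+1 (Xl ++ G) (Xr ++ D)) ->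
  forall n G D, der L n (f :: G) D -> der L n (Xl ++ G) (Xr ++ D).
Proof.
move=> prem n G D d; rewrite (Permutation_catC Xl) (Permutation_catC Xr).
apply: (der_invert_left_gen _ d (Permutation_refl _)) => m G' D' /prem.
by rewrite (Permutation_catC Xl) (Permutation_catC Xr).
Qed.

End Inversion.
Lemma der_Rand_inv n a1 a2 G D :
  der L n G (And a1 a2 :: D) -> der L n G (a1 :: D) /\ der L n G (a2 :: D).
Proof.
move=> d; split.
- apply: (der_invert_right (Xl := [::]) (Xr := [:: a1])) d => // m G' D' [d1 _].
  exact: der_succ.
- apply: (der_invert_right (Xl := [::]) (Xr := [:: a2])) d => // m G' D' [_ d2].
  exact: der_succ.
Qed.

Lemma der_Land_inv n a1 a2 G D :
  der L n (And a1 a2 :: G) D -> der L n (a1 :: a2 :: G) D.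
Proof.
apply: (der_invert_left (Xl := [:: a1; a2]) (Xr := [::])) => // m G' D'.
exact: der_succ.
Qed.

Lemma der_Ror_inv n a1 a2 G D :
  der L n G (Or a1 a2 :: D) -> der L n G (a1 :: a2 :: D).
Proof.
apply: (der_invert_right (Xl := [::]) (Xr := [:: a1; a2])) => // m G' D'.
exact: der_succ.
Qed.

Lemma der_Lor_inv n a1 a2 G D :
  der L n (Or a1 a2 :: G) D -> der L n (a1 :: G) D /\ der L n (a2 :: G) D.
Proof.
move=> d; split.
- apply: (der_invert_left (Xl := [:: a1]) (Xr := [::])) d => // m G' D' [d1 _].
  exact: der_succ.
- apply: (der_invert_left (Xl := [:: a2]) (Xr := [::])) d => // m G' D' [_ d2].
  exact: der_succ.
Qed.

Lemma der_Rimp_inv n a1 a2 G D :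
  der L n G (Imp a1 a2 :: D) -> der L n (a1 :: G) (a2 :: D).
Proof.
apply: (der_invert_right (Xl := [:: a1]) (Xr := [:: a2])) => // m G' D'.
exact: der_succ.
Qed.

Lemma der_Limp_inv n a1 a2 G D :
  der L n (Imp a1 a2 :: G) D -> der L n G (a1 :: D) /\ der L n (a2 :: G) D.
Proof.
move=> d; split.
- apply: (der_invert_left (Xl := [::]) (Xr := [:: a1])) d => // m G' D' [d1 _].
  exact: der_succ.
- apply: (der_invert_left (Xl := [:: a2]) (Xr := [::])) d => // m G' D' [_ d2].
  exact: der_succ.
Qed.

Lemma der_Rneg_inv n a G D : der L n G (Neg a :: D) -> der L n (a :: G) D.
Proof.
apply: (der_invert_right (Xl := [:: a]) (Xr := [::])) => // m G' D'.
exact: der_succ.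
Qed.

Lemma der_Lneg_inv n a G D : der L n (Neg a :: G) D -> der L n G (a :: D).
Proof.
apply: (der_invert_left (Xl := [::]) (Xr := [:: a])) => // m G' D'.
exact: der_succ.
Qed.

End Derivations.

Theorem proposition3p9 (A : finType) (hA : 0 < #|A|) (L : calculus) :
  forall (n : nat) (a1 a2 : form A) (G D : list (form A)),
  (* (R and) *)
  (der L n G (And a1 a2 :: D) -> der L n G (a1 :: D) /\ der L n G (a2 :: D)) /\
  (* (L and) *)
  (der L n (And a1 a2 :: G) D -> der L n (a1 :: a2 :: G) D) /\
  (* (R or) *)
  (der L n G (Or a1 a2 :: D) -> der L n G (a1 :: a2 :: D)) /\
  (* (L or) *)
  (der L n (Or a1 a2 :: G) D -> der L n (a1 :: G) D /\ der L n (a2 :: G) D) /\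
  (* (R imp) *)
  (der L n G (Imp a1 a2 :: D) -> der L n (a1 :: G) (a2 :: D)) /\
  (* (L imp) *)
  (der L n (Imp a1 a2 :: G) D -> der L n G (a1 :: D) /\ der L n (a2 :: G) D) /\
  (* (R neg) *)
  (der L n G (Neg a1 :: D) -> der L n (a1 :: G) D) /\
  (* (L neg) *)
  (der L n (Neg a1 :: G) D -> der L n G (a1 :: D)).
Proof.
move=> n a1 a2 G D.
split; first exact: der_Rand_inv.
split; first exact: der_Land_inv.
split; first exact: der_Ror_inv.
split; first exact: der_Lor_inv.
split; first exact: der_Rimp_inv.
split; first exact: der_Limp_inv.
split; [exact: der_Rneg_inv | exact: der_Lneg_inv].
Qed.
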